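(* For $i\in\{1,2\}$, let $G_i$ be a graph with maximum degree $\Delta_i$ and degeneracy $d_i$ that contains $K_{s_i,t_i}$ as a subgraph, where $1\leq s_i\leq t_i$. Let $$f(s_1,t_1,s_2,t_2):=\max\{s_1+s_2+s_1s_2,\ \min\{t_1+t_2,\ s_1(t_2+1),\ s_2(t_1+1)\},\ \min\{s_1t_2,\ s_2t_1\}\}.$$ Then $$\max\{d_1+d_2+d_1d_2,\ f(s_1,t_1,s_2,t_2),\ \min\{\Delta_1,\Delta_2\}+1\}\ \leq\ \operatorname{degen}(G_1\boxtimes G_2)\ \leq\ d_1+d_2+\min\{d_1\Delta_2,\ d_2\Delta_1\}.$$
   Context: The degeneracy $\operatorname{degen}(G)$ of a graph $G$ is the minimum integer $d$ such that every subgraph of $G$ has minimum degree at most $d$. The strong product $G_1 \boxtimes G_2$ has vertex set $V(G_1)\times V(G_2)$, with distinct vertices $(a,v),(b,u)$ adjacent iff ($a=b$ or $ab\in E(G_1)$) and ($u=v$ or $uv\in E(G_2)$). *)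

From mathcomp Require Import all_boot all_order.
Set Implicit Arguments. Unset Strict Implicit. Unset Printing Implicit Defensive.

Section Graphs.
Variable T : finType.

Definition simple_graph (e : rel T) := symmetric e /\ irreflexive e.

Definition sdeg (e' : rel T) (S : {set T}) (v : T) : nat := #|[set u in S | e' v u]|.

Definition is_subgraph_edges (e : rel T) (E : {set T * T}) : bool :=
  [forall u, forall v, ((u, v) \in E) ==> e u v && ((v, u) \in E)].

Definition degen_ok (e : rel T) (d : nat) : bool :=
  [forall S : {set T}, forall E : {set T * T},
     ((S != set0) && is_subgraph_edges e E) ==>
     [exists v in S, #|[set u in S | (v, u) \in E]| <= d]].

Lemma degen_ok_exists (e : rel T) : exists d, degen_ok e d.
Proof.
exists #|T|; apply/forallP => S; apply/forallP => E; apply/implyP => /andP[/set0Pn [v vS] _].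
by apply/existsP; exists v; rewrite vS max_card.
Qed.

Definition degen (e : rel T) : nat := ex_minn (degen_ok_exists e).

Definition maxdeg (e : rel T) : nat := \max_(v : T) #|[set u | e v u]|.

Definition contains_Kst (e : rel T) (s t : nat) : Prop :=
  exists (A B : {set T}), [/\ #|A| = s, #|B| = t, [disjoint A & B] &
    forall a b, a \in A -> b \in B -> e a b].
End Graphs.

Definition strong_prod (T1 T2 : finType) (e1 : rel T1) (e2 : rel T2) : rel (T1 * T2) :=
  fun x y => [&& x != y, (x.1 == y.1) || e1 x.1 y.1 & (x.2 == y.2) || e2 x.2 y.2].

Definition fst_bound (s1 t1 s2 t2 : nat) : nat :=
  maxn (s1 + s2 + s1 * s2)
       (maxn (minn (t1 + t2) (minn (s1 * t2.+1) (s2 * t1.+1)))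
             (minn (s1 * t2) (s2 * t1))).

From mathcomp Require Import all_boot all_order.
From mathcomp Require Import zify.
Set Implicit Arguments. Unset Strict Implicit. Unset Printing Implicit Defensive.

(* Degeneracy is a statement about induced subgraphs: degen e <= d iff every nonempty
   vertex set contains a vertex with at most d neighbours inside it.  Lower bounds for
   the strong product come from vertex sets of large minimum degree: the product of a
   d1-core and a d2-core (closed neighbourhoods multiply, giving (d1+1)(d2+1)-1), and
   sets assembled from the bicliques K_{s_i,t_i} or from stars of maximum degree.  For
   the upper bound, in a vertex set S pick a of degree <= d1 in the first projection of
   S, then b of degree <= d2 in the fibre of S over a: the vertex (a,b) has at most
   d2 + d1 (D2 + 1) neighbours in S.  Exchanging the factors gives d1 + d2 + d2 D1. *)


Section Degeneracy.
Variables (T : finType) (e : rel T).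
Hypothesis e_sym : symmetric e.

Lemma degen_okP : degen_ok e (degen e).
Proof. by rewrite /degen; case: ex_minnP. Qed.

Lemma degen_min d : degen_ok e d -> degen e <= d.
Proof. by rewrite /degen; case: ex_minnP => m _; apply. Qed.

(* Deleting edges only lowers degrees, so induced subgraphs suffice. *)
Lemma degen_okE d :
  degen_ok e d = [forall S : {set T}, (S != set0) ==> [exists v in S, sdeg e S v <= d]].
Proof.
rewrite /degen_ok; apply/idP/idP => /forallP H; apply/forallP => S.
  apply/implyP => SP.
  have E_sub : is_subgraph_edges e [set p | e p.1 p.2].
    by apply/forallP => u; apply/forallP => v; apply/implyP; rewrite !inE /= e_sym => ->.
  have /existsP[v /andP[vS le_vd]] := implyP (forallP (H S) _) (introT andP (conj SP E_sub)).
  apply/existsP; exists v; rewrite vS; apply: leq_trans le_vd.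
  by apply: subset_leq_card; apply/subsetP => u; rewrite !inE.
apply/forallP => E; apply/implyP => /andP[SP EP].
have /existsP[v /andP[vS le_vd]] := implyP (H S) SP.
apply/existsP; exists v; rewrite vS; apply: leq_trans le_vd.
apply: subset_leq_card; apply/subsetP => u; rewrite !inE => /andP[-> uv].
by have /forallP/(_ v)/forallP/(_ u)/implyP/(_ uv)/andP[] := EP.
Qed.

Lemma degen_sdeg S : S != set0 -> exists2 v, v \in S & sdeg e S v <= degen e.
Proof.
move=> SP; have := degen_okP; rewrite degen_okE => /forallP/(_ S)/implyP/(_ SP).
by case/existsP => v /andP[]; exists v.
Qed.

Lemma degen_le d :
  (forall S, S != set0 -> exists2 v, v \in S & sdeg e S v <= d) -> degen e <= d.
Proof.
move=> H; apply: degen_min; rewrite degen_okE; apply/forallP => S; apply/implyP => SP.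
by have [v vS le_vd] := H S SP; apply/existsP; exists v; rewrite vS.
Qed.

Lemma degen_ge S k : S != set0 -> {in S, forall v, k <= sdeg e S v} -> k <= degen e.
Proof. by move=> /degen_sdeg[v vS le_v] H; apply: leq_trans (H v vS) le_v. Qed.

Lemma degen_core (x0 : T) :
  exists2 S, S != set0 & {in S, forall v, degen e <= sdeg e S v}.
Proof.
case Hd: (degen e) => [|n].
  by exists [set x0]; [apply/set0Pn; exists x0; rewrite inE | move=> v _].
have : ~~ degen_ok e n by apply/negP => /degen_min; rewrite Hd ltnn.
rewrite degen_okE negb_forall => /existsP[S]; rewrite negb_imply => /andP[SP].
by rewrite negb_exists => /forallP H; exists S => // v vS; have := H v; rewrite vS ltnNge.
Qed.

End Degeneracy.

Lemma degen_embed (T T' : finType) (e : rel T) (e' : rel T') (f : T -> T') :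
  symmetric e -> symmetric e' -> injective f -> (forall x y, e' (f x) (f y) = e x y) ->
  degen e <= degen e'.
Proof.
move=> e_sym e'_sym f_inj f_e; apply: degen_le => // S SP.
have fSP : f @: S != set0 by case/set0Pn: SP => x xS; apply/set0Pn; exists (f x); apply: imset_f.
have [_ /imsetP[v vS ->] le_v] := degen_sdeg e'_sym fSP.
exists v => //; apply: leq_trans le_v; rewrite /sdeg -(card_imset _ f_inj).
apply: subset_leq_card; apply/subsetP => _ /imsetP[u + ->]; rewrite !inE f_e => /andP[uS ->].
by rewrite imset_f.
Qed.

Lemma cardsD1_notin (T : finType) (A : {set T}) x : x \notin A -> #|A :\ x| = #|A|.
Proof. by move=> xA; rewrite [RHS](cardsD1 x) (negbTE xA). Qed.

Section Neighbourhoods.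
Variables (T : finType) (e : rel T).

Definition closed_nbhd (v : T) : {set T} := v |: [set u | e v u].

Lemma maxdeg_ge v : #|[set u | e v u]| <= maxdeg e.
Proof. exact: (@leq_bigmax T (fun v => #|[set u | e v u]|)). Qed.

Lemma maxdeg_attained (x0 : T) : exists v, #|[set u | e v u]| = maxdeg e.
Proof.
have T0 : 0 < #|T| by apply/card_gt0P; exists x0.
have [v Hv] := @eq_bigmax T (fun v => #|[set u | e v u]|) T0.
by exists v; rewrite /maxdeg Hv.
Qed.

Lemma card_closed_nbhd v : #|closed_nbhd v| <= (maxdeg e).+1.
Proof. by rewrite cardsU1 -add1n leq_add ?leq_b1 ?maxdeg_ge. Qed.

Lemma card_closed_nbhdI (S : {set T}) v : irreflexive e -> v \in S ->
  #|S :&: closed_nbhd v| = (sdeg e S v).+1.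
Proof.
move=> e_irr vS; have -> : S :&: closed_nbhd v = v |: [set u in S | e v u].
  by apply/setP => u; rewrite !inE; case: eqP => [->|]; rewrite ?vS ?andbT.
by rewrite cardsU1 inE e_irr andbF.
Qed.

End Neighbourhoods.

Definition biclique (T : finType) (e : rel T) (A B : {set T}) : Prop :=
  [disjoint A & B] /\ forall a b, a \in A -> b \in B -> e a b.

Lemma biclique_star (T : finType) (e : rel T) v :
  irreflexive e -> biclique e [set v] [set u | e v u].
Proof.
move=> e_irr; split=> [|a b]; last by rewrite !inE => /eqP ->.
by rewrite disjoints1 inE e_irr.
Qed.

Lemma biclique_degen_ge (T : finType) (e : rel T) (A B : {set T}) :
  symmetric e -> biclique e A B -> A != set0 -> minn #|A| #|B| <= degen e.
Proof.
move=> e_sym [_ AB] AP; apply: (degen_ge e_sym (S := A :|: B)).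
  by case/set0Pn: AP => a aA; apply/set0Pn; exists a; rewrite inE aA.
move=> v; rewrite inE => /orP[vA|vB].
  rewrite geq_min; apply/orP; right; apply: subset_leq_card.
  by apply/subsetP => u uB; rewrite !inE uB orbT AB.
rewrite geq_min; apply/orP; left; apply: subset_leq_card.
by apply/subsetP => u uA; rewrite !inE uA e_sym AB.
Qed.

Section StrongProduct.
Variables (T1 T2 : finType) (e1 : rel T1) (e2 : rel T2).
Hypotheses (g1 : simple_graph e1) (g2 : simple_graph e2).
Local Notation G := (strong_prod e1 e2).

Lemma strong_prod_sym : symmetric G.
Proof.
move=> x y; rewrite /strong_prod eq_sym (eq_sym x.1) (eq_sym x.2).
by rewrite (proj1 g1 x.1) (proj1 g2 x.2).
Qed.

Lemma strong_prodE x u :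
  G x u = (u != x) && (u \in setX (closed_nbhd e1 x.1) (closed_nbhd e2 x.2)).
Proof. by rewrite /strong_prod !inE eq_sym (eq_sym u.1) (eq_sym u.2). Qed.

Lemma sdeg_strong_prod_ge (S P : {set T1 * T2}) x :
  P \subset S -> P \subset setX (closed_nbhd e1 x.1) (closed_nbhd e2 x.2) ->
  #|P :\ x| <= sdeg G S x.
Proof.
move=> /subsetP PS /subsetP Px; apply: subset_leq_card; apply/subsetP => u.
by rewrite !inE strong_prodE => /andP[-> uP]; rewrite PS ?Px.
Qed.

Lemma degen_strong_prod_ge (x1 : T1) (x2 : T2) :
  degen e1 + degen e2 + degen e1 * degen e2 <= degen G.
Proof.
have [S1 S1P S1_deg] := degen_core (proj1 g1) x1.
have [S2 S2P S2_deg] := degen_core (proj1 g2) x2.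
apply: (degen_ge strong_prod_sym (S := setX S1 S2)).
  case/set0Pn: S1P => a aS1; case/set0Pn: S2P => b bS2.
  by apply/set0Pn; exists (a, b); rewrite inE aS1 bS2.
move=> [y1 y2]; rewrite inE => /andP /= [yS1 yS2].
set P := setX (S1 :&: closed_nbhd e1 y1) (S2 :&: closed_nbhd e2 y2).
have PS : P \subset setX S1 S2 by rewrite setXS ?subsetIl.
have Py : P \subset setX (closed_nbhd e1 y1) (closed_nbhd e2 y2) by rewrite setXS ?subsetIr.
apply: leq_trans (sdeg_strong_prod_ge (x := (y1, y2)) PS Py).
have y_in : (y1, y2) \in P by rewrite !inE yS1 yS2 !eqxx.
have := cardsD1 (y1, y2) P.
rewrite y_in add1n cardsX (card_closed_nbhdI (proj2 g1)) // (card_closed_nbhdI (proj2 g2)) //.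
have := leq_mul (S1_deg y1 yS1) (S2_deg y2 yS2).
have := S1_deg y1 yS1; have := S2_deg y2 yS2.
move: (degen e1) (degen e2) (sdeg e1 S1 y1) (sdeg e2 S2 y2) #|P :\ (y1, y2)| => d1 d2 n1 n2 m.
nia.
Qed.

Lemma degen_strong_prod_le : degen G <= degen e1 + degen e2 + degen e1 * maxdeg e2.
Proof.
apply: (degen_le strong_prod_sym) => S /set0Pn[x0 x0S].
set S1 := [set x.1 | x in S].
have [a aS1 deg_a] : exists2 a, a \in S1 & sdeg e1 S1 a <= degen e1.
  by apply: (degen_sdeg (proj1 g1)); apply/set0Pn; exists x0.1; apply: imset_f.
set F := [set y | (a, y) \in S].
have [b bF deg_b] : exists2 b, b \in F & sdeg e2 F b <= degen e2.
  apply: (degen_sdeg (proj1 g2)); case/imsetP: aS1 => x xS ax.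
  by apply/set0Pn; exists x.2; rewrite inE ax -surjective_pairing.
exists (a, b); first by rewrite inE in bF.
have nbhd_sub : [set u in S | G (a, b) u] \subset
    setX [set a] [set y in F | e2 b y] :|: setX [set u in S1 | e1 a u] (closed_nbhd e2 b).
  apply/subsetP => -[u1 u2]; rewrite !inE strong_prodE !inE /= => /andP[uS /andP[ub]].
  case/andP => /orP[/eqP u1a | a_u1] b_u2; last by rewrite (imset_f _ uS) a_u1 b_u2 orbT.
  move: ub b_u2; rewrite u1a xpair_eqE eqxx /= => /negbTE -> /= ->.
  by rewrite -u1a uS.
apply: leq_trans (subset_leq_card nbhd_sub) _; rewrite cardsU !cardsX cards1 mul1n.
have := leq_mul deg_a (card_closed_nbhd e2 b); rewrite mulnS.
rewrite /sdeg in deg_a deg_b *; lia.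
Qed.

Section Bicliques.
Variables (A1 B1 : {set T1}) (A2 B2 : {set T2}).
Hypotheses (bc1 : biclique e1 A1 B1) (bc2 : biclique e2 A2 B2).

Let AB1 a b : a \in A1 -> b \in B1 -> e1 a b. Proof. exact: bc1.2. Qed.
Let BA1 a b : a \in B1 -> b \in A1 -> e1 a b. Proof. by move=> *; rewrite (proj1 g1) AB1. Qed.
Let AB2 a b : a \in A2 -> b \in B2 -> e2 a b. Proof. exact: bc2.2. Qed.
Let BA2 a b : a \in B2 -> b \in A2 -> e2 a b. Proof. by move=> *; rewrite (proj1 g2) AB2. Qed.

(* On A1 x B2 u B1 x A2 every vertex is adjacent to the whole other block. *)
Lemma degen_strong_prod_ge_biclique_mixed :
  A1 != set0 -> B2 != set0 -> minn (#|A1| * #|B2|) (#|B1| * #|A2|) <= degen G.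
Proof.
case/set0Pn => a1 a1A; case/set0Pn => b2 b2B.
apply: (degen_ge strong_prod_sym (S := setX A1 B2 :|: setX B1 A2)).
  by apply/set0Pn; exists (a1, b2); rewrite !inE a1A b2B.
move=> [x1 x2]; rewrite !inE /= => /orP[/andP[xA1 xB2]|/andP[xB1 xA2]].
  have PS : setX B1 A2 \subset setX A1 B2 :|: setX B1 A2 by apply: subsetUr.
  have Px : setX B1 A2 \subset setX (closed_nbhd e1 x1) (closed_nbhd e2 x2).
    by apply/subsetP => -[u1 u2]; rewrite !inE /= => /andP[/AB1 -> // /BA2 ->]; rewrite ?orbT.
  apply: leq_trans (sdeg_strong_prod_ge (x := (x1, x2)) PS Px).
  by rewrite cardsD1_notin ?cardsX ?geq_minr // !inE (disjointFr bc1.1 xA1).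
have PS : setX A1 B2 \subset setX A1 B2 :|: setX B1 A2 by apply: subsetUl.
have Px : setX A1 B2 \subset setX (closed_nbhd e1 x1) (closed_nbhd e2 x2).
  by apply/subsetP => -[u1 u2]; rewrite !inE /= => /andP[/BA1 -> // /AB2 ->]; rewrite ?orbT.
apply: leq_trans (sdeg_strong_prod_ge (x := (x1, x2)) PS Px).
by rewrite cardsD1_notin ?cardsX ?geq_minl // !inE (disjointFl bc1.1 xB1).
Qed.

Let S_cross := setX A1 (A2 :|: B2) :|: setX (A1 :|: B1) A2.

Let sdeg_cross_AA x1 x2 : x1 \in A1 -> x2 \in A2 -> #|B1| + #|B2| <= sdeg G S_cross (x1, x2).
Proof.
move=> xA1 xA2; set P := setX [set x1] B2 :|: setX B1 [set x2].
have PS : P \subset S_cross.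
  apply/subsetP => -[u1 u2]; rewrite !inE /=.
  by case/orP => /andP[] => [/eqP -> ->|-> /eqP ->]; rewrite ?xA1 ?xA2 ?orbT.
have Px : P \subset setX (closed_nbhd e1 x1) (closed_nbhd e2 x2).
  apply/subsetP => -[u1 u2]; rewrite !inE /=.
  by case/orP => /andP[] => [/eqP -> /(AB2 xA2) ->|/(AB1 xA1) -> /eqP ->]; rewrite eqxx ?orbT.
apply: leq_trans (sdeg_strong_prod_ge (x := (x1, x2)) PS Px).
rewrite cardsD1_notin; last by rewrite !inE /= (disjointFr bc2.1 xA2) (disjointFr bc1.1 xA1) andbF.
rewrite cardsU !cardsX !cards1 mul1n muln1 addnC.
suff -> : setX [set x1] B2 :&: setX B1 [set x2] = set0 by rewrite cards0 subn0.
by apply/setP => -[u1 u2]; rewrite !inE /=; case: eqP => // ->; rewrite (disjointFr bc1.1 xA1) andbF.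
Qed.

Let sdeg_cross_AB x1 x2 : x1 \in A1 -> x2 \in B2 -> #|B1|.+1 * #|A2| <= sdeg G S_cross (x1, x2).
Proof.
move=> xA1 xB2; set P := setX (x1 |: B1) A2.
have PS : P \subset S_cross.
  by apply/subsetP => -[u1 u2]; rewrite !inE /= => /andP[/orP[/eqP ->|->] ->]; rewrite ?xA1 !orbT.
have Px : P \subset setX (closed_nbhd e1 x1) (closed_nbhd e2 x2).
  apply/subsetP => -[u1 u2]; rewrite !inE /=.
  by case/andP => [/orP[/eqP ->|/(AB1 xA1) ->] /(BA2 xB2) ->]; rewrite ?eqxx ?orbT.
apply: leq_trans (sdeg_strong_prod_ge (x := (x1, x2)) PS Px).
rewrite cardsD1_notin; last by rewrite !inE /= (disjointFl bc2.1 xB2) andbF.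
by rewrite cardsX cardsU1 (disjointFr bc1.1 xA1).
Qed.

Let sdeg_cross_BA x1 x2 : x1 \in B1 -> x2 \in A2 -> #|A1| * #|B2|.+1 <= sdeg G S_cross (x1, x2).
Proof.
move=> xB1 xA2; set P := setX A1 (x2 |: B2).
have PS : P \subset S_cross.
  by apply/subsetP => -[u1 u2]; rewrite !inE /= => /andP[-> /orP[/eqP ->|->]]; rewrite ?xA2 ?orbT.
have Px : P \subset setX (closed_nbhd e1 x1) (closed_nbhd e2 x2).
  apply/subsetP => -[u1 u2]; rewrite !inE /=.
  by case/andP => [/(BA1 xB1) -> /orP[/eqP ->|/(AB2 xA2) ->]]; rewrite ?eqxx ?orbT.
apply: leq_trans (sdeg_strong_prod_ge (x := (x1, x2)) PS Px).
rewrite cardsD1_notin; last by rewrite !inE /= (disjointFl bc1.1 xB1).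
by rewrite cardsX cardsU1 (disjointFr bc2.1 xA2).
Qed.

Lemma degen_strong_prod_ge_biclique_cross : A1 != set0 -> A2 != set0 ->
  minn (#|B1| + #|B2|) (minn (#|A1| * #|B2|.+1) (#|A2| * #|B1|.+1)) <= degen G.
Proof.
case/set0Pn => a1 a1A; case/set0Pn => a2 a2A.
apply: (degen_ge strong_prod_sym (S := S_cross)).
  by apply/set0Pn; exists (a1, a2); rewrite !inE a1A a2A.
move=> [x1 x2]; rewrite !inE /=.
have [xA1|xA1] := boolP (x1 \in A1); have [xA2|xA2] := boolP (x2 \in A2);
  rewrite /= ?orbF ?andbT ?andbF //.
- by move=> _; apply: leq_trans (sdeg_cross_AA xA1 xA2); rewrite geq_minl.
- by move=> xB2; apply: leq_trans (sdeg_cross_AB xA1 xB2); lia.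
- by move=> xB1; apply: leq_trans (sdeg_cross_BA xB1 xA2); lia.
Qed.

End Bicliques.

Lemma degen_strong_prod_ge_maxdeg a1 b1 a2 b2 : e1 a1 b1 -> e2 a2 b2 ->
  (minn (maxdeg e1) (maxdeg e2)).+1 <= degen G.
Proof.
move=> ab1 ab2; have [v1 deg_v1] := maxdeg_attained e1 a1.
have [v2 deg_v2] := maxdeg_attained e2 a2.
have D1P : 0 < maxdeg e1.
  by apply: leq_trans (maxdeg_ge e1 a1); apply/card_gt0P; exists b1; rewrite inE.
have D2P : 0 < maxdeg e2.
  by apply: leq_trans (maxdeg_ge e2 a2); apply/card_gt0P; exists b2; rewrite inE.
have := degen_strong_prod_ge_biclique_cross
  (biclique_star v1 (proj2 g1)) (biclique_star v2 (proj2 g2)).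
rewrite -!card_gt0 !cards1 deg_v1 deg_v2 !mul1n => /(_ isT isT); apply: leq_trans; lia.
Qed.

End StrongProduct.

Lemma degen_strong_prodC (T1 T2 : finType) (e1 : rel T1) (e2 : rel T2) :
  simple_graph e1 -> simple_graph e2 -> degen (strong_prod e1 e2) = degen (strong_prod e2 e1).
Proof.
have swap_le (U1 U2 : finType) (r1 : rel U1) (r2 : rel U2) :
    simple_graph r1 -> simple_graph r2 -> degen (strong_prod r1 r2) <= degen (strong_prod r2 r1).
  move=> h1 h2; apply: (degen_embed (f := fun x : U1 * U2 => (x.2, x.1))
    (strong_prod_sym h1 h2) (strong_prod_sym h2 h1)); first by move=> [? ?] [? ?] [-> ->].
  move=> [x1 x2] [y1 y2]; rewrite /strong_prod /= !xpair_eqE [(x2 == y2) && _]andbC.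
  by case: (_ || r1 _ _); case: (_ || r2 _ _); rewrite ?andbT ?andbF.
by move=> g1 g2; apply/eqP; rewrite eqn_leq !swap_le.
Qed.

Lemma degen_strong_prod_le_min (T1 T2 : finType) (e1 : rel T1) (e2 : rel T2) :
  simple_graph e1 -> simple_graph e2 ->
  degen (strong_prod e1 e2) <=
    degen e1 + degen e2 + minn (degen e1 * maxdeg e2) (degen e2 * maxdeg e1).
Proof.
move=> g1 g2; rewrite addn_minr leq_min degen_strong_prod_le //=.
by rewrite degen_strong_prodC // [degen e1 + _]addnC degen_strong_prod_le.
Qed.

Theorem mainTheorem7 (T1 T2 : finType) (e1 : rel T1) (e2 : rel T2)
    (s1 t1 s2 t2 : nat) :
  simple_graph e1 -> simple_graph e2 ->
  1 <= s1 -> s1 <= t1 -> 1 <= s2 -> s2 <= t2 ->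
  contains_Kst e1 s1 t1 -> contains_Kst e2 s2 t2 ->
  let d1 := degen e1 in let d2 := degen e2 in
  let D1 := maxdeg e1 in let D2 := maxdeg e2 in
  maxn (d1 + d2 + d1 * d2) (maxn (fst_bound s1 t1 s2 t2) (minn D1 D2).+1)
    <= degen (strong_prod e1 e2)
  /\ degen (strong_prod e1 e2) <= d1 + d2 + minn (d1 * D2) (d2 * D1).
Proof.
move=> g1 g2 s1P st1 s2P st2 [A1 [B1 [cA1 cB1 dj1 AB1]]] [A2 [B2 [cA2 cB2 dj2 AB2]]] /=.
have bc1 : biclique e1 A1 B1 := conj dj1 AB1.
have bc2 : biclique e2 A2 B2 := conj dj2 AB2.
have A1P : A1 != set0 by rewrite -card_gt0 cA1.
have A2P : A2 != set0 by rewrite -card_gt0 cA2.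
have B1P : B1 != set0 by rewrite -card_gt0 cB1 (leq_trans s1P).
have B2P : B2 != set0 by rewrite -card_gt0 cB2 (leq_trans s2P).
have /set0Pn[a1 a1A1] := A1P; have /set0Pn[b1 b1B1] := B1P.
have /set0Pn[a2 a2A2] := A2P; have /set0Pn[b2 b2B2] := B2P.
have s1_d1 := biclique_degen_ge (proj1 g1) bc1 A1P.
have s2_d2 := biclique_degen_ge (proj1 g2) bc2 A2P.
rewrite cA1 cB1 (minn_idPl st1) in s1_d1; rewrite cA2 cB2 (minn_idPl st2) in s2_d2.
have dd := degen_strong_prod_ge g1 g2 a1 a2.
have cross := degen_strong_prod_ge_biclique_cross g1 g2 bc1 bc2 A1P A2P.
have mixed := degen_strong_prod_ge_biclique_mixed g1 g2 bc1 bc2 A1P B2P.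
rewrite cA1 cB1 cA2 cB2 [t1 * s2]mulnC in cross mixed.
rewrite /fst_bound !geq_max dd cross mixed degen_strong_prod_le_min //.
rewrite (degen_strong_prod_ge_maxdeg g1 g2 (AB1 _ _ a1A1 b1B1) (AB2 _ _ a2A2 b2B2)) !andbT /=.
split=> //; exact: leq_trans (leq_add (leq_add s1_d1 s2_d2) (leq_mul s1_d1 s2_d2)) dd.
Qed.
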